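(* Let $\mathfrak l$ be a real finite-dimensional nilpotent Lie algebra with $\dim\mathfrak l'=2$ and $\mathfrak l'\subset\mathfrak z(\mathfrak l)$, let $\bar{\mathfrak l}\subset\mathfrak l$ be a 3-dimensional subspace with $[\bar{\mathfrak l},\bar{\mathfrak l}]=\mathfrak l'$, let $\mathfrak a$ be a semisimple orthogonal $\mathfrak l$-module and let $[\alpha,\gamma]\in\mathcal H^2_Q(\mathfrak l,\mathfrak a)$ be admissible, represented with $\alpha(\mathfrak l,\mathfrak l)\subset\mathfrak a^{\mathfrak l}$. Then $\alpha([L,\mathfrak l],\mathfrak l)=0$ for all $L\in\mathfrak l$ satisfying $[L,\bar{\mathfrak l}]=0$.
   Context: For a Lie algebra $\mathfrak l$: $\mathfrak l^1=\mathfrak l$, $\mathfrak l^{k+1}=[\mathfrak l,\mathfrak l^k]$, $\mathfrak l'=\mathfrak l^2$, $\mathfrak z(\mathfrak l)$ the centre. An orthogonal $\mathfrak l$-module $(\rho,\mathfrak a)$ is a finite-dimensional real vector space with a nondegenerate symmetric bilinear form $\langle\cdot,\cdot\rangle_{\mathfrak a}$ and a representation by skew-adjoint maps; $\mathfrak a^{\mathfrak l}$ its invariants. $C^p(\mathfrak l,\mathfrak a)$: alternating $p$-linear maps with Chevalley–Eilenberg differential $d$; $C^p(\mathfrak l)=C^p(\mathfrak l,\mathbb R)$; $\langle\alpha\wedge\beta\rangle$ is the wedge product followed by contraction with $\langle\cdot,\cdot\rangle_{\mathfrak a}$. $\mathcal Z^2_Q(\mathfrak l,\mathfrak a)=\{(\alpha,\gamma)\in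 C^2(\mathfrak l,\mathfrak a)\oplus C^3(\mathfrak l): d\alpha=0,d\gamma=\frac12\langle\alpha\wedge\alpha\rangle\}$; the group $C^1(\mathfrak l,\mathfrak a)\oplus C^2(\mathfrak l)$ with $(\tau_1,\sigma_1)*(\tau_2,\sigma_2)=(\tau_1+\tau_2,\sigma_1+\sigma_2+\frac12\langle\tau_1\wedge\tau_2\rangle)$ acts by $(\alpha,\gamma)(\tau,\sigma)=(\alpha+d\tau,\gamma+d\sigma+\langle(\alpha+\frac12d\tau)\wedge\tau\rangle)$; $\mathcal H^2_Q(\mathfrak l,\mathfrak a)$ is the orbit set. Admissibility: with $\mathfrak l^{m+2}=0$, $\mathfrak l_{(0)}=\mathfrak z(\mathfrak l)\cap\ker\rho$, $\mathfrak l_{(k)}=\mathfrak z(\mathfrak l)\cap\mathfrak l^{k+1}$ ($k\ge1$), and a representative with $\alpha(\mathfrak l,\mathfrak l)\subset\mathfrak a^{\mathfrak l}$, the class is admissible iff for all $0\le k\le m$: $(A_k)$ whenever $L_0\in\mathfrak l_{(k)}$ and there are $A_0\in\mathfrak a$, $Z_0\in(\mathfrak l^{k+1})^*$ with $\alpha(L,L_0)=0$ and $\gamma(L,L_0,\cdot)=-\langle A_0,\alpha(L,\cdot)\rangle_{\mathfrak a}+\langle Z_0,[L,\cdot]\rangle$ on $\mathfrak l^{k+1}$ for all $L$, then $L_0=0$; $(B_k)$ $\alpha$ applied to the kernel of the bracket map $\mathfrak l\otimes\mathfrak l^{k+1}\to\mathfrak l$ is a nondegenerate subspace of $\mathfrak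 a$. *)

From HB Require Import structures.
From mathcomp Require Import all_boot all_order all_algebra.
From mathcomp Require Import reals.
Set Implicit Arguments. Unset Strict Implicit. Unset Printing Implicit Defensive.
Import Order.TTheory GRing.Theory Num.Theory.
Local Open Scope ring_scope.

Section LieDefs.
Variables (R : realType) (V A : vectType R).

Definition lie_bracket (br : V -> V -> V) : Prop :=
  (forall (a : R) x y z, br (a *: x + y) z = a *: br x z + br y z) /\
  (forall (a : R) x y z, br z (a *: x + y) = a *: br z x + br z y) /\
  (forall x, br x x = 0) /\
  (forall x y z, br x (br y z) + br y (br z x) + br z (br x y) = 0).

Definition bspace (br : V -> V -> V) (U W : {vspace V}) : {vspace V} :=
  <<[seq br u w | u <- vbasis U, w <- vbasis W]>>%VS.

(* lower central series: lcs br n = l^n for n >= 1 (l^1 = l, l^{n+1} = [l, l^n]);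
   lcs br 0 := l as well (unused); lcs br n = lcs_aux br (n-1). *)
Fixpoint lcs_aux (br : V -> V -> V) (n : nat) : {vspace V} :=
  match n with
  | 0 => fullv
  | k.+1 => bspace br fullv (lcs_aux br k)
  end.
Definition lcs (br : V -> V -> V) (n : nat) : {vspace V} := lcs_aux br n.-1.

Definition central (br : V -> V -> V) (x : V) : Prop := forall y, br x y = 0.

Definition orth_module (br : V -> V -> V) (rho : V -> A -> A) (b : A -> A -> R)
  : Prop :=
  (forall (c : R) x y u, rho (c *: x + y) u = c *: rho x u + rho y u) /\
  (forall (c : R) x u v, rho x (c *: u + v) = c *: rho x u + rho x v) /\
  (forall x y u, rho (br x y) u = rho x (rho y u) - rho y (rho x u)) /\
  (forall (c : R) u v w, b (c *: u + v) w = c * b u w + b v w) /\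
  (forall u v, b u v = b v u) /\
  (forall u, (forall v, b u v = 0) -> u = 0) /\
  (forall x u v, b (rho x u) v = - b u (rho x v)).

Definition invariant_subspace (rho : V -> A -> A) (U : {vspace A}) : Prop :=
  forall x u, u \in U -> rho x u \in U.

Definition semisimple_module (rho : V -> A -> A) : Prop :=
  forall U : {vspace A}, invariant_subspace rho U ->
    exists W : {vspace A}, invariant_subspace rho W /\
      (U + W)%VS = fullv /\ (U :&: W)%VS = 0%VS.

Definition cochain2 (alpha : V -> V -> A) : Prop :=
  (forall (c : R) x y z, alpha (c *: x + y) z = c *: alpha x z + alpha y z) /\
  (forall (c : R) x y z, alpha z (c *: x + y) = c *: alpha z x + alpha z y) /\
  (forall x, alpha x x = 0).

Definition cochain3 (gamma : V -> V -> V -> R) : Prop :=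
  (forall (c : R) x y z w, gamma (c *: x + y) z w = c * gamma x z w + gamma y z w) /\
  (forall (c : R) x y z w, gamma z (c *: x + y) w = c * gamma z x w + gamma z y w) /\
  (forall (c : R) x y z w, gamma z w (c *: x + y) = c * gamma z w x + gamma z w y) /\
  (forall x y, gamma x x y = 0) /\
  (forall x y, gamma y x x = 0) /\
  (forall x y, gamma x y x = 0).

Definition d2 (br : V -> V -> V) (rho : V -> A -> A) (alpha : V -> V -> A)
  (x1 x2 x3 : V) : A :=
  rho x1 (alpha x2 x3) - rho x2 (alpha x1 x3) + rho x3 (alpha x1 x2)
  - alpha (br x1 x2) x3 + alpha (br x1 x3) x2 - alpha (br x2 x3) x1.

(* Chevalley-Eilenberg differential of a real (trivial module) 3-cochain *)
Definition d3 (br : V -> V -> V) (gamma : V -> V -> V -> R) (x1 x2 x3 x4 : V) : R :=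
  - gamma (br x1 x2) x3 x4 + gamma (br x1 x3) x2 x4 - gamma (br x1 x4) x2 x3
  - gamma (br x2 x3) x1 x4 + gamma (br x2 x4) x1 x3 - gamma (br x3 x4) x1 x2.

(* 1/2 <alpha /\ alpha> (shuffle convention for the wedge product) *)
Definition half_wedge (b : A -> A -> R) (alpha : V -> V -> A) (x1 x2 x3 x4 : V) : R :=
  b (alpha x1 x2) (alpha x3 x4) - b (alpha x1 x3) (alpha x2 x4)
  + b (alpha x1 x4) (alpha x2 x3).

Definition quad_cocycle (br : V -> V -> V) (rho : V -> A -> A) (b : A -> A -> R)
  (alpha : V -> V -> A) (gamma : V -> V -> V -> R) : Prop :=
  cochain2 alpha /\ cochain3 gamma /\
  (forall x1 x2 x3, d2 br rho alpha x1 x2 x3 = 0) /\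
  (forall x1 x2 x3 x4, d3 br gamma x1 x2 x3 x4 = half_wedge b alpha x1 x2 x3 x4).

Definition lk (br : V -> V -> V) (rho : V -> A -> A) (k : nat) (L0 : V) : Prop :=
  central br L0 /\
  (if k is 0 then (forall u, rho L0 u = 0) else L0 \in lcs br k.+1).

(* Z0 : V -> R restricted to U is a linear functional on U, i.e. an element of U^* *)
Definition functional_on (U : {vspace V}) (Z0 : V -> R) : Prop :=
  forall (c : R) u v, u \in U -> v \in U -> Z0 (c *: u + v) = c * Z0 u + Z0 v.

Definition condA (br : V -> V -> V) (rho : V -> A -> A) (b : A -> A -> R)
  (alpha : V -> V -> A) (gamma : V -> V -> V -> R) (k : nat) : Prop :=
  forall L0, lk br rho k L0 ->
    (exists (A0 : A) (Z0 : V -> R), functional_on (lcs br k.+1) Z0 /\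
       (forall L, alpha L L0 = 0) /\
       (forall L X, X \in lcs br k.+1 ->
          gamma L L0 X = - b A0 (alpha L X) + Z0 (br L X))) ->
    L0 = 0.

(* alpha applied to the kernel of the bracket map l (x) l^{k+1} -> l;
   an element of l (x) l^{k+1} is written as a finite sum sum_i x_i (x) y_i,
   y_i in l^{k+1}, encoded by the list of pairs (x_i, y_i). *)
Definition alpha_ker (br : V -> V -> V) (alpha : V -> V -> A) (k : nat) (a : A)
  : Prop :=
  exists s : seq (V * V),
    (forall p, p \in s -> p.2 \in lcs br k.+1) /\
    \sum_(p <- s) br p.1 p.2 = 0 /\
    a = \sum_(p <- s) alpha p.1 p.2.

Definition condB (br : V -> V -> V) (b : A -> A -> R) (alpha : V -> V -> A)
  (k : nat) : Prop :=
  forall a, alpha_ker br alpha k a ->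
    (forall c, alpha_ker br alpha k c -> b a c = 0) -> a = 0.

End LieDefs.

From HB Require Import structures.
From mathcomp Require Import all_boot all_order all_algebra.
From mathcomp Require Import reals.
Import Order.TTheory GRing.Theory Num.Theory.
Set Implicit Arguments. Unset Strict Implicit.
Local Open Scope ring_scope.

(* Put Z = [L, X].  Because l' is central and rho kills the image of alpha,
   d alpha = 0 becomes the cyclic identity
     alpha([x,y],z) = alpha([x,z],y) - alpha([y,z],x);
   with [L, lbar] = 0 and l' = [lbar, lbar] it gives alpha(l', L) = 0 and then
   alpha(Z, lbar) = 0.  Evaluating d gamma = 1/2 <alpha /\ alpha> at (Z, z, Y, k)
   with Z, z in l', where every term of d gamma vanishes (gamma is alternating
   and dim l' = 2), gives <alpha(Z,Y), alpha(z,k)> = <alpha(Z,k), alpha(z,Y)>;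
   expanding alpha(l', .) once more by the cyclic identity shows that alpha(Z,Y)
   is orthogonal to alpha(l, l').  Finally Y (x) (-Z) lies in the kernel of the
   bracket l (x) l^2 -> l, so alpha(Z,Y) belongs to the subspace of (B_1), to
   which it is orthogonal; nondegeneracy forces alpha(Z,Y) = 0. *)

Section LinearMaps.
Variables (R : pzRingType) (U W : lmodType R) (f : U -> W).
Hypothesis f_lin : linear f.
Let fL : {linear U -> W} := HB.pack f (GRing.isLinear.Build R U W *:%R f f_lin).

Lemma linear_fun0 : f 0 = 0. Proof. exact: raddf0 fL. Qed.
Lemma linear_funD x y : f (x + y) = f x + f y. Proof. exact: (raddfD fL x y). Qed.
Lemma linear_funN x : f (- x) = - f x. Proof. exact: (raddfN fL x). Qed.
Lemma linear_funZ a x : f (a *: x) = a *: f x. Proof. exact: (linearZ_LR fL a x). Qed.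

End LinearMaps.

Section ScalarMaps.
Variables (R : pzRingType) (U : lmodType R) (f : U -> R).
Hypothesis f_lin : scalar f.

Lemma scalar_fun0 : f 0 = 0. Proof. exact: (@linear_fun0 _ _ R^o _ f_lin). Qed.
Lemma scalar_funD x y : f (x + y) = f x + f y.
Proof. exact: (@linear_funD _ _ R^o _ f_lin). Qed.
Lemma scalar_funN x : f (- x) = - f x. Proof. exact: (@linear_funN _ _ R^o _ f_lin). Qed.
Lemma scalar_funZ a x : f (a *: x) = a * f x.
Proof. exact: (@linear_funZ _ _ R^o _ f_lin). Qed.

End ScalarMaps.

Section LinearSpan.
Variables (K : fieldType) (U W : vectType K) (f : U -> W).
Hypothesis f_lin : linear f.
Let fL : {linear U -> W} := HB.pack f (GRing.isLinear.Build K U W *:%R f f_lin).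

Lemma linear_span_mem (S : {vspace W}) (X : seq U) :
  {in X, forall x, f x \in S} -> forall v, v \in <<X>>%VS -> f v \in S.
Proof.
move=> fXS v /(coord_span (X := in_tuple X)) ->.
rewrite -[f _]/(fL _) linear_sum; apply: rpred_sum => i _.
by rewrite linearZ rpredZ // fXS // mem_nth.
Qed.

Lemma linear_span_eq0 (X : seq U) :
  {in X, forall x, f x = 0} -> forall v, v \in <<X>>%VS -> f v = 0.
Proof.
move=> fX0 v vX; apply/eqP; rewrite -memv0.
by apply: linear_span_mem vX => x /fX0 ->; rewrite mem0v.
Qed.

End LinearSpan.

Section Cochains.
Variables (R : realType) (V A : vectType R).

Section Cochain2.
Variables (alpha : V -> V -> A).
Hypothesis alpha2 : cochain2 alpha.

Lemma cochain2_linl y : linear (alpha ^~ y).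
Proof. by case: alpha2 => al _ c x z; apply: al. Qed.

Lemma cochain2_linr x : linear (alpha x).
Proof. by case: alpha2 => _ [ar _] c y z; apply: ar. Qed.

Lemma cochain2_0l y : alpha 0 y = 0.
Proof. exact: linear_fun0 (cochain2_linl y). Qed.

Lemma cochain2_Nr x y : alpha x (- y) = - alpha x y.
Proof. exact: (linear_funN (cochain2_linr x) y). Qed.

Lemma cochain2_antisym x y : alpha y x = - alpha x y.
Proof.
case: alpha2 => _ [_ axx]; apply/eqP; rewrite -addr_eq0.
have := axx (x + y).
rewrite (linear_funD (cochain2_linl _)) !(linear_funD (cochain2_linr _)) !axx.
by rewrite add0r addr0 addrC => ->.
Qed.

End Cochain2.

Section Cochain3.
Variables (gamma : V -> V -> V -> R).
Hypothesis gamma3 : cochain3 gamma.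

Lemma cochain3_linl y z : scalar (fun x => gamma x y z).
Proof. by case: gamma3 => gl _ c x x'; apply: gl. Qed.

Lemma cochain3_linm x z : scalar (fun y => gamma x y z).
Proof. by case: gamma3 => _ [gm _] c y y'; apply: gm. Qed.

Lemma cochain3_linr x y : scalar (gamma x y).
Proof. by case: gamma3 => _ [_ [gr _]] c z z'; apply: gr. Qed.

Lemma cochain3_0l y z : gamma 0 y z = 0.
Proof. exact: (scalar_fun0 (cochain3_linl y z)). Qed.

Lemma cochain3_dim2 (U : {vspace V}) p q r :
  (\dim U <= 2)%N -> p \in U -> q \in U -> r \in U -> gamma p q r = 0.
Proof.
case: gamma3 => _ [_ [_ [g1 [g2 g3]]]] dimU pU qU rU.
have : ~~ free [:: p; q; r].
  apply: contraL dimU => /eqP dim3; rewrite -ltnNge.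
  apply: (@leq_trans (\dim <<[:: p; q; r]>>)); first by rewrite dim3.
  by apply/dimvS/span_subvP => x; rewrite !inE => /or3P [] /eqP ->.
rewrite free_cons => /nandP [/negbNE | ].
  rewrite span_cons span_seq1 => /memv_addP [_ /vlineP [a ->] [_ /vlineP [c ->] ->]].
  rewrite (scalar_funD (cochain3_linl q r)).
  by rewrite !(scalar_funZ (cochain3_linl _ _)) g1 g3 !mulr0 addr0.
rewrite free_cons => /nandP [/negbNE | ].
  rewrite span_seq1 => /vlineP [c ->].
  by rewrite (scalar_funZ (cochain3_linm _ _)) g2 mulr0.
rewrite free_cons span_nil memv0 nil_free andbT negbK => /eqP ->.
exact: (scalar_fun0 (cochain3_linr _ _)).
Qed.

End Cochain3.
End Cochains.

Section LieAlgebra.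
Variables (R : realType) (V : vectType R) (br : V -> V -> V).

Lemma bspace_linear_eq0 (W : vectType R) (f : V -> W) (U1 U2 : {vspace V}) :
  linear f -> (forall u w, u \in U1 -> w \in U2 -> f (br u w) = 0) ->
  forall v, v \in bspace br U1 U2 -> f v = 0.
Proof.
move=> f_lin f0; apply: (linear_span_eq0 f_lin) => _ /allpairsP [[u w] [uU wU ->]].
by apply: f0; apply: vbasis_mem.
Qed.

Hypothesis br_lie : lie_bracket br.

Lemma lie_cochain2 : cochain2 br.
Proof. by case: br_lie => ? [? [? _]]. Qed.

Lemma mem_bspace (U W : {vspace V}) x y :
  x \in U -> y \in W -> br x y \in bspace br U W.
Proof.
rewrite -{1}(span_basis (vbasisP U)) -{1}(span_basis (vbasisP W)) => xU yW.
apply: (linear_span_mem (cochain2_linl lie_cochain2 y)) xU => u uU.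
apply: (linear_span_mem (cochain2_linr lie_cochain2 u)) yW => w wW.
by apply: memv_span; apply: allpairs_f.
Qed.

Lemma mem_lcs2 x y : br x y \in lcs br 2.
Proof. exact: mem_bspace (memvf x) (memvf y). Qed.

Lemma central_brl z y : central br z -> br y z = 0.
Proof. by move=> zc; rewrite (cochain2_antisym lie_cochain2) zc oppr0. Qed.

End LieAlgebra.

Section OrthogonalForm.
Variables (R : realType) (V A : vectType R) (br : V -> V -> V) (rho : V -> A -> A)
  (b : A -> A -> R).
Hypothesis orth : orth_module br rho b.

Lemma orth_form_linl v : scalar (b^~ v).
Proof. by case: orth => _ [_ [_ [bl _]]] c u w; apply: bl. Qed.

Lemma orth_form_linr u : scalar (b u).
Proof. by case: orth => _ [_ [_ [bl [bsym _]]]] c v w; rewrite !(bsym u) bl. Qed.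

End OrthogonalForm.

Section Cocycle.
Variables (R : realType) (V A : vectType R) (br : V -> V -> V) (rho : V -> A -> A)
  (alpha : V -> V -> A).
Hypotheses (br_lie : lie_bracket br) (alpha2 : cochain2 alpha).

Lemma alpha_ker_central k z y :
  z \in lcs br k.+1 -> central br z -> alpha_ker br alpha k (alpha z y).
Proof.
move=> zk zc; exists [:: (y, - z)]; split; last split.
- by move=> p; rewrite inE => /eqP -> /=; rewrite rpredN.
- rewrite big_seq1 /= (linear_funN (cochain2_linr (lie_cochain2 br_lie) y)).
  by rewrite (central_brl br_lie) // oppr0.
- by rewrite big_seq1 /= (cochain2_Nr alpha2) -(cochain2_antisym alpha2).
Qed.

Lemma alpha_ker_orthogonal (b : A -> A -> R) a k :
  scalar (b a) -> (forall x y, y \in lcs br k.+1 -> b a (alpha x y) = 0) ->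
  forall c, alpha_ker br alpha k c -> b a c = 0.
Proof.
move=> ba_lin ba0 _ [s [sk [_ ->]]].
rewrite big_seq; apply: (big_ind (fun c => b a c = 0)).
- exact: (scalar_fun0 ba_lin).
- by move=> c c' ac ac'; rewrite (scalar_funD ba_lin) ac ac' addr0.
- by move=> p /sk; apply: ba0.
Qed.

Hypotheses (alpha_closed : forall x y z, d2 br rho alpha x y z = 0)
  (rho_alpha : forall x y z, rho z (alpha x y) = 0).

Lemma alpha_br_cyclic x y z :
  alpha (br x y) z = alpha (br x z) y - alpha (br y z) x.
Proof.
move: (alpha_closed x y z); rewrite /d2 !rho_alpha subr0 addr0 sub0r => /eqP.
by rewrite -addrA addrC subr_eq0 => /eqP ->.
Qed.

Lemma alpha_br_central x y z : central br z -> alpha (br x y) z = 0.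
Proof.
move=> zc; rewrite alpha_br_cyclic !(central_brl br_lie _ zc).
by rewrite !(cochain2_0l alpha2) subr0.
Qed.

Lemma alpha_lcs2_central Z z : Z \in lcs br 2 -> central br z -> alpha Z z = 0.
Proof.
move=> Z2 zc.
apply: (bspace_linear_eq0 (cochain2_linl alpha2 z)) Z2 => u w _ _.
exact: alpha_br_central.
Qed.

End Cocycle.

Section CentralPairing.
Variables (R : realType) (V A : vectType R) (br : V -> V -> V) (rho : V -> A -> A)
  (b : A -> A -> R) (alpha : V -> V -> A) (gamma : V -> V -> V -> R)
  (lbar : {vspace V}) (L : V).
Hypotheses (br_lie : lie_bracket br) (dim_lcs2 : \dim (lcs br 2) = 2%N)
  (lcs2_central : forall x, x \in lcs br 2 -> central br x)
  (lbar_gen : bspace br lbar lbar = lcs br 2)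
  (orth : orth_module br rho b) (cocycle : quad_cocycle br rho b alpha gamma)
  (rho_alpha : forall x y z, rho z (alpha x y) = 0)
  (L_lbar : forall Y, Y \in lbar -> br L Y = 0).

Let alpha2 : cochain2 alpha. Proof. by case: cocycle. Qed.
Let gamma3 : cochain3 gamma. Proof. by case: cocycle => _ []. Qed.
Let alpha_closed x y z : d2 br rho alpha x y z = 0.
Proof. by case: cocycle => _ [_ []]. Qed.
Let gamma_closed x y z w : d3 br gamma x y z w = half_wedge b alpha x y z w.
Proof. by case: cocycle => _ [_ [_]]. Qed.

Lemma alpha_lcs2_L v : v \in lcs br 2 -> alpha v L = 0.
Proof.
rewrite -lbar_gen; apply: (bspace_linear_eq0 (cochain2_linl alpha2 L)) => u w uL wL.
move: (alpha_br_cyclic alpha_closed rho_alpha L u w).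
by rewrite !L_lbar // !(cochain2_0l alpha2) sub0r => /esym/eqP; rewrite oppr_eq0 => /eqP.
Qed.

Lemma alpha_brL_lbar X k : k \in lbar -> alpha (br L X) k = 0.
Proof.
move=> kL; rewrite (alpha_br_cyclic alpha_closed rho_alpha) L_lbar //.
by rewrite (cochain2_0l alpha2) alpha_lcs2_L ?subr0 // mem_lcs2.
Qed.

Lemma pairing_lcs2_swap Z z Y k : Z \in lcs br 2 -> z \in lcs br 2 ->
  b (alpha Z Y) (alpha z k) = b (alpha Z k) (alpha z Y).
Proof.
move=> Z2 z2; have := gamma_closed Z z Y k; rewrite /d3 /half_wedge.
rewrite !(lcs2_central Z2) !(lcs2_central z2) !(cochain3_0l gamma3).
rewrite (cochain3_dim2 gamma3 (U := lcs br 2)) ?mem_lcs2 ?dim_lcs2 //.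
rewrite (alpha_lcs2_central br_lie alpha2 alpha_closed rho_alpha Z2 (lcs2_central z2)).
rewrite (scalar_fun0 (orth_form_linl orth _)).
by rewrite !oppr0 !addr0 sub0r => /esym/eqP; rewrite addrC subr_eq0 => /eqP.
Qed.

Lemma pairing_brL_lbar X Y z w : z \in lcs br 2 -> w \in lbar ->
  b (alpha (br L X) Y) (alpha z w) = 0.
Proof.
move=> z2 wL; rewrite pairing_lcs2_swap ?mem_lcs2 // alpha_brL_lbar //.
exact: (scalar_fun0 (orth_form_linl orth _)).
Qed.

Lemma pairing_brL_lcs2 X Y x y : y \in lcs br 2 ->
  b (alpha (br L X) Y) (alpha x y) = 0.
Proof.
set a := alpha (br L X) Y; have a_lin := orth_form_linr orth a.
move=> y2; rewrite (cochain2_antisym alpha2 y) (scalar_funN a_lin).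
suff -> : b a (alpha y x) = 0 by rewrite oppr0.
have lin : scalar (fun y => b a (alpha y x)).
  by move=> c u v; rewrite /= (cochain2_linl alpha2) a_lin.
rewrite -lbar_gen in y2; apply: (bspace_linear_eq0 (W := R^o) lin) y2 => u w uL wL /=.
rewrite (alpha_br_cyclic alpha_closed rho_alpha) (scalar_funD a_lin).
rewrite (scalar_funN a_lin) !pairing_brL_lbar ?mem_lcs2 //.
by rewrite oppr0 addr0.
Qed.

End CentralPairing.

Unset Implicit Arguments. Set Strict Implicit.

Theorem lemma5 (R : realType) (V A : vectType R) (br : V -> V -> V)
  (rho : V -> A -> A) (b : A -> A -> R)
  (alpha : V -> V -> A) (gamma : V -> V -> V -> R)
  (m : nat) (lbar : {vspace V}) :
  lie_bracket br ->
  lcs br m.+2 = 0%VS ->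
  \dim (lcs br 2) = 2%N ->
  (forall x, x \in lcs br 2 -> central br x) ->
  \dim lbar = 3%N ->
  bspace br lbar lbar = lcs br 2 ->
  orth_module br rho b ->
  semisimple_module rho ->
  quad_cocycle br rho b alpha gamma ->
  (forall x y z, rho z (alpha x y) = 0) ->
  (forall k, (k <= m)%N -> condA br rho b alpha gamma k /\ condB br b alpha k) ->
  forall L : V, (forall Y, Y \in lbar -> br L Y = 0) ->
  forall X Y : V, alpha (br L X) Y = 0.
Proof.
move=> br_lie lcs_nil dim_lcs2 lcs2_central _ lbar_gen orth _ cocycle rho_alpha
  admissible L L_lbar X Y.
have m_gt0 : (0 < m)%N.
  by case: m lcs_nil {admissible} => // lcs2_0; move: dim_lcs2; rewrite lcs2_0 dimv0.
have [_ condB1] := admissible 1%N m_gt0.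
have alpha2 : cochain2 alpha by case: cocycle.
have LX2 := mem_lcs2 br_lie L X.
apply: (condB1 _ (alpha_ker_central br_lie alpha2 Y LX2 (lcs2_central _ LX2))).
apply: (alpha_ker_orthogonal (orth_form_linr orth _)) => x y.
exact: (pairing_brL_lcs2 br_lie dim_lcs2 lcs2_central lbar_gen orth cocycle rho_alpha L_lbar).
Qed.
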